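(* Let $p\ge1$, $U\ge1$, positive integers $n_1,\dots,n_U$ with $n=\sum_un_u$, symmetric matrices $G^{A,u}\in\mathbb{R}^{p\times p}$ ($u=1,\dots,U$), symmetric $G^{C,u}\in\mathbb{R}^{p\times p}$ for each $u$ with $n_u\ge2$, and $G^{D,uv}\in\mathbb{R}^{p\times p}$ for $u\ne v$ with $G^{D,vu}=(G^{D,uv})^T$. Let $G^s\in\mathbb{R}^{np\times np}$ be the block matrix with diagonal blocks $G^s_{\mathcal{V}_u}=G^{A,u}$ if $n_u=1$ and $G^s_{\mathcal{V}_u}=\mathbf{1}_{n_u}\mathbf{1}_{n_u}^T\otimes G^{C,u}+I_{n_u}\otimes(G^{A,u}-G^{C,u})$ if $n_u\ge2$, and off-diagonal blocks $G^s_{\mathcal{V}_u\mathcal{V}_v}=\mathbf{1}_{n_u}\mathbf{1}_{n_v}^T\otimes G^{D,uv}$ ($u\ne v$). Then $G^s\succeq0$ if and only if $G^{A,u}\succeq0$ for all $u$ with $n_u=1$, $G^{A,u}-G^{C,u}\succeq0$ for all $u$ with $n_u\ge2$, and $H\succeq0$, where $H\in\mathbb{R}^{Up\times Up}$ is the symmetric block matrix with blocks $H^{uu}=n_uG^{A,u}+n_u(n_u-1)G^{C,u}$ (with $G^{C,u}:=0$ when $n_u=1$) and $H^{uv}=n_un_vG^{D,uv}$ for $u\ne v$. *)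

From HB Require Import structures.
From mathcomp Require Import all_boot all_order all_algebra.
From mathcomp Require Export mxtens.
From mathcomp Require Import reals.
Set Implicit Arguments. Unset Strict Implicit. Unset Printing Implicit Defensive.
Import Order.TTheory GRing.Theory Num.Theory.
Local Open Scope ring_scope.

Definition psd (R : realType) (m : nat) (A : 'M[R]_m) : Prop :=
  forall x : 'cV[R]_m, 0 <= (x^T *m A *m x) 0 0.

Definition ones (R : realType) (m n : nat) : 'M[R]_(m, n) := const_mx 1.

Definition Gs_diag (R : realType) (p U : nat) (n : 'I_U -> nat)
  (GA GC : 'I_U -> 'M[R]_p) (u : 'I_U) : 'M[R]_(n u * p) :=
  if n u == 1%N then (1%:M : 'M[R]_(n u)) *t GA u   (* = G^{A,u} since n_u = 1 *)
  else (ones R (n u) (n u)) *t GC u + (1%:M : 'M[R]_(n u)) *t (GA u - GC u).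

Definition Gs (R : realType) (p U : nat) (n : 'I_U -> nat)
  (GA GC : 'I_U -> 'M[R]_p) (GD : 'I_U -> 'I_U -> 'M[R]_p)
  : 'M[R]_(\sum_(u < U) (n u * p)) :=
  \mxdiag_(u < U) Gs_diag n GA GC u
  + \mxblock_(u < U, v < U)
      (if u == v then 0 else (ones R (n u) (n v)) *t GD u v).

Definition Hmat (R : realType) (p U : nat) (n : 'I_U -> nat)
  (GA GC : 'I_U -> 'M[R]_p) (GD : 'I_U -> 'I_U -> 'M[R]_p)
  : 'M[R]_(\sum_(u < U) p) :=
  \mxblock_(u < U, v < U)
    (if u == v then
       (n u)%:R *: GA u + (n u * (n u).-1)%:R *: (if n u == 1%N then 0 else GC u)
     else (n u * n v)%:R *: GD u v).

From mathcomp Require Import all_boot all_order all_algebra.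
From mathcomp Require Import mxtens reals.
From mathcomp Require Import ring.
Set Implicit Arguments. Unset Strict Implicit. Unset Printing Implicit Defensive.
Import Order.TTheory GRing.Theory Num.Theory.
Local Open Scope ring_scope.

(** Write [x_(u,i)] for the [p]-blocks of [x], [z_u] for the mean of
  [x_(u,1), ..., x_(u,n_u)], and [B_u = G^(A,u) - G^(C,u)] (with [G^(C,u) = 0]
  when [n_u = 1]).  Centering every block at its mean turns the quadratic form into
  [x^T G^s x = sum_(u,i) (x_(u,i) - z_u)^T B_u (x_(u,i) - z_u) + z^T H z],
  because [sum_i x_(u,i) = n_u z_u] makes the cross terms cancel.  Hence the
  conditions suffice.  Conversely, constant blocks [x_(u,i) = z_u] show that [H] is
  psd; the blocks [w, -w, 0, ..., 0] in one group with [n_u >= 2] have mean [0] and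
  give [2 w^T B_u w]; and for [n_u = 1] the diagonal block of [H] is [G^(A,u)]. *)

Section MxForm.
Variable R : comPzRingType.

Definition mxform m n (A : 'M[R]_(m, n)) (x : 'cV[R]_m) (y : 'cV[R]_n) : R :=
  (x^T *m A *m y) 0 0.

Lemma mxformE m n (A : 'M[R]_(m, n)) x y :
  mxform A x y = \sum_i \sum_j x i 0 * A i j * y j 0.
Proof.
rewrite /mxform mxE exchange_big; apply: eq_bigr => j _.
by rewrite mxE mulr_suml; apply: eq_bigr => i _; rewrite !mxE.
Qed.

Lemma mxformDl m n (A : 'M[R]_(m, n)) x1 x2 y :
  mxform A (x1 + x2) y = mxform A x1 y + mxform A x2 y.
Proof. by rewrite /mxform linearD /= !mulmxDl !mxE. Qed.

Lemma mxformDr m n (A : 'M[R]_(m, n)) x y1 y2 :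
  mxform A x (y1 + y2) = mxform A x y1 + mxform A x y2.
Proof. by rewrite /mxform !mulmxDr !mxE. Qed.

Lemma mxformZl m n (A : 'M[R]_(m, n)) a x y :
  mxform A (a *: x) y = a * mxform A x y.
Proof. by rewrite /mxform linearZ /= -!scalemxAl !mxE. Qed.

Lemma mxformZr m n (A : 'M[R]_(m, n)) a x y :
  mxform A x (a *: y) = a * mxform A x y.
Proof. by rewrite /mxform -!scalemxAr !mxE. Qed.

Lemma mxform0l m n (A : 'M[R]_(m, n)) y : mxform A 0 y = 0.
Proof. by rewrite /mxform trmx0 !mul0mx mxE. Qed.

Lemma mxform0r m n (A : 'M[R]_(m, n)) x : mxform A x 0 = 0.
Proof. by rewrite /mxform mulmx0 mxE. Qed.

Lemma mxformBl m n (A : 'M[R]_(m, n)) x1 x2 y :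
  mxform A (x1 - x2) y = mxform A x1 y - mxform A x2 y.
Proof. by rewrite mxformDl -scaleN1r mxformZl mulN1r. Qed.

Lemma mxformBr m n (A : 'M[R]_(m, n)) x y1 y2 :
  mxform A x (y1 - y2) = mxform A x y1 - mxform A x y2.
Proof. by rewrite mxformDr -scaleN1r mxformZr mulN1r. Qed.

Lemma mxform_suml m n (A : 'M[R]_(m, n)) (I : finType) (P : pred I) F y :
  mxform A (\sum_(i | P i) F i) y = \sum_(i | P i) mxform A (F i) y.
Proof. exact: (big_morph (mxform A ^~ y) (fun x1 x2 => mxformDl A x1 x2 y) (mxform0l A y)). Qed.

Lemma mxform_sumr m n (A : 'M[R]_(m, n)) (I : finType) (P : pred I) x F :
  mxform A x (\sum_(i | P i) F i) = \sum_(i | P i) mxform A x (F i).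
Proof. exact: (big_morph (mxform A x) (mxformDr A x) (mxform0r A x)). Qed.

Lemma mxformD m n (A B : 'M[R]_(m, n)) x y :
  mxform (A + B) x y = mxform A x y + mxform B x y.
Proof. by rewrite /mxform mulmxDr mulmxDl mxE. Qed.

Lemma mxformB m n (A B : 'M[R]_(m, n)) x y :
  mxform (A - B) x y = mxform A x y - mxform B x y.
Proof. by rewrite /mxform mulmxBr mulmxBl !mxE. Qed.

Lemma mxformZ m n (A : 'M[R]_(m, n)) a x y :
  mxform (a *: A) x y = a * mxform A x y.
Proof. by rewrite /mxform -scalemxAr -scalemxAl !mxE. Qed.

Lemma mxform0 m n x y : mxform (0 : 'M[R]_(m, n)) x y = 0.
Proof. by rewrite /mxform mulmx0 mul0mx mxE. Qed.

Lemma mxform_mxblock U (q : 'I_U -> nat) (B : forall u v, 'M[R]_(q u, q v)) x y :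
  mxform (\mxblock_(u, v) B u v) x y =
  \sum_u \sum_v mxform (B u v) (submxcol x u) (submxcol y v).
Proof.
rewrite /mxform -[in LHS](submxcolK x) -[in LHS](submxcolK y) tr_mxcol.
rewrite mul_mxrow_mxblock mul_mxrow_mxcol summxE exchange_big.
by apply: eq_bigr => v _; rewrite mulmx_suml summxE.
Qed.

Lemma mxform_mxblock_mxcol U (q : 'I_U -> nat) (B : forall u v, 'M[R]_(q u, q v))
    (z : forall u, 'cV[R]_(q u)) :
  mxform (\mxblock_(u, v) B u v) (\mxcol_u z u) (\mxcol_u z u) =
  \sum_u \sum_v mxform (B u v) (z u) (z v).
Proof. by rewrite mxform_mxblock; under eq_bigr do under eq_bigr do rewrite !mxcolK. Qed.

Lemma mxform_mxdiag U (q : 'I_U -> nat) (D : forall u, 'M[R]_(q u)) x y :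
  mxform (\mxdiag_u D u) x y = \sum_u mxform (D u) (submxcol x u) (submxcol y u).
Proof.
rewrite mxform_mxblock; apply: eq_bigr => u _.
rewrite (bigD1 u) //= eqxx conform_mx_id big1 ?addr0 // => v /negPf.
by rewrite eq_sym => ->; rewrite mxform0.
Qed.

Lemma mxform_mxblock_mxcol1 U p (B : 'I_U -> 'I_U -> 'M[R]_p) u (w : 'cV[R]_p) :
  mxform (\mxblock_(v, v') B v v') (\mxcol_v (if v == u then w else 0))
         (\mxcol_v (if v == u then w else 0)) = mxform (B u u) w w.
Proof.
rewrite mxform_mxblock_mxcol (bigD1 u) //= [X in _ + X]big1 ?addr0; last first.
  by move=> v /negPf ->; rewrite big1 // => v' _; rewrite mxform0l.
rewrite (bigD1 u) //= big1 ?addr0 ?eqxx // => v /negPf ->; exact: mxform0r.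
Qed.

End MxForm.

Section TensBlocks.
Variables (T : Type) (m p : nat).

Definition tensblock (x : 'cV[T]_(m * p)) (i : 'I_m) : 'cV[T]_p :=
  \col_k x (mxtens_index (i, k)) 0.

Definition tensglue (F : 'I_m -> 'cV[T]_p) : 'cV[T]_(m * p) :=
  \col_k F (mxtens_unindex k).1 (mxtens_unindex k).2 0.

Lemma tensblock_glue F i : tensblock (tensglue F) i = F i.
Proof. by apply/matrixP => k j; rewrite !mxE mxtens_indexK [j]ord1. Qed.

End TensBlocks.

Lemma sum_mxtens_index (V : nmodType) m p (F : 'I_(m * p) -> V) :
  \sum_a F a = \sum_(i < m) \sum_(k < p) F (mxtens_index (i, k)).
Proof.
rewrite pair_big /= (reindex (@mxtens_index m p)) //=; first by apply: eq_bigr => -[].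
by exists (@mxtens_unindex m p) => z _; rewrite (mxtens_indexK, mxtens_unindexK).
Qed.

Section TensForm.
Variable R : comPzRingType.

Lemma mxform_tens m m' p (P : 'M[R]_(m, m')) (M : 'M[R]_p) x y :
  mxform (P *t M) x y =
  \sum_i \sum_j P i j * mxform M (tensblock x i) (tensblock y j).
Proof.
rewrite mxformE sum_mxtens_index; apply: eq_bigr => i _.
under eq_bigr do rewrite sum_mxtens_index.
rewrite exchange_big; apply: eq_bigr => j _.
rewrite mxformE mulr_sumr; apply: eq_bigr => k _.
rewrite mulr_sumr; apply: eq_bigr => l _.
by rewrite tensmxE !mxE; ring.
Qed.

Lemma mxform_tens1 m p (M : 'M[R]_p) x y :
  mxform ((1%:M : 'M[R]_m) *t M) x y =
  \sum_i mxform M (tensblock x i) (tensblock y i).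
Proof.
rewrite mxform_tens; apply: eq_bigr => i _.
rewrite (bigD1 i) //= mxE eqxx mul1r big1 ?addr0 // => j /negPf.
by rewrite mxE eq_sym => ->; rewrite mul0r.
Qed.

Lemma mxform_tens_const1 m m' p (M : 'M[R]_p) x y :
  mxform ((const_mx 1 : 'M[R]_(m, m')) *t M) x y =
  mxform M (\sum_i tensblock x i) (\sum_j tensblock y j).
Proof.
rewrite mxform_tens mxform_suml; apply: eq_bigr => i _.
by rewrite mxform_sumr; apply: eq_bigr => j _; rewrite mxE mul1r.
Qed.

End TensForm.

Section Mean.
Variables (R : numFieldType) (p : nat).

Definition mean k (X : 'I_k -> 'cV[R]_p) : 'cV[R]_p := k%:R^-1 *: \sum_i X i.

Lemma sum_mean k (X : 'I_k -> 'cV[R]_p) : (0 < k)%N -> \sum_i X i = k%:R *: mean X.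
Proof. by move=> k_gt0; rewrite scalerA mulfV ?scale1r // pnatr_eq0 -lt0n. Qed.

Lemma mean_const k (w : 'cV[R]_p) : (0 < k)%N -> mean (fun _ : 'I_k => w) = w.
Proof.
move=> k_gt0; rewrite /mean sumr_const card_ord -scaler_nat scalerA.
by rewrite mulVf ?scale1r // pnatr_eq0 -lt0n.
Qed.

Lemma mxform_sum_mean k l (A : 'M[R]_p) (X : 'I_k -> 'cV_p) (Y : 'I_l -> 'cV_p) :
  (0 < k)%N -> (0 < l)%N ->
  mxform A (\sum_i X i) (\sum_j Y j) = (k * l)%:R * mxform A (mean X) (mean Y).
Proof.
move=> k_gt0 l_gt0.
by rewrite (sum_mean X) // (sum_mean Y) // mxformZl mxformZr natrM mulrA.
Qed.

Lemma mxform_centered k (A C : 'M[R]_p) (X : 'I_k -> 'cV_p) : (0 < k)%N ->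
  \sum_i mxform (A - C) (X i) (X i) + mxform C (\sum_i X i) (\sum_i X i) =
  \sum_i mxform (A - C) (X i - mean X) (X i - mean X)
  + mxform (k%:R *: A + (k * k.-1)%:R *: C) (mean X) (mean X).
Proof.
move=> k_gt0; under [in RHS]eq_bigr do rewrite mxformBl !mxformBr.
rewrite !sumrB -mxform_suml -(mxform_sumr _ _ _ X) sumr_const card_ord.
rewrite (sum_mean X) // !mxformZl !mxformZr !mxformB !mxformD !mxformZ.
by rewrite natrM -subn1 natrB // -mulr_natr; ring.
Qed.

End Mean.

Lemma sum_diag_offdiag (V : nmodType) (I : finType) (f : I -> I -> V) :
  \sum_u \sum_v f u v = \sum_u f u u + \sum_u \sum_v (if u == v then 0 else f u v).
Proof.
rewrite -big_split; apply: eq_bigr => u _ /=.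
rewrite (bigD1 u) //= [in RHS](bigD1 u) //= eqxx add0r; congr (_ + _).
by apply: eq_bigr => v /negPf; rewrite eq_sym => ->.
Qed.

Lemma sum_ord_supp01 (V : nmodType) k (g : nat -> V) : (2 <= k)%N ->
  (forall i, (2 <= i)%N -> g i = 0) -> \sum_(i < k) g i = g 0%N + g 1%N.
Proof.
move=> k_ge2 g_supp; rewrite -(big_mkord xpredT g).
case: k k_ge2 => // -[|k] // _.
by rewrite !big_nat_recl // big1 ?addr0 ?addrA // => i _; apply: g_supp.
Qed.

Definition piece (T : Type) U p (n : 'I_U -> nat) (x : 'cV[T]_(\sum_u n u * p)) u
  : 'I_(n u) -> 'cV[T]_p := tensblock (submxcol x u).
Arguments piece {T U p n} x u.

Definition glue (T : Type) U p (n : 'I_U -> nat) (F : forall u, 'I_(n u) -> 'cV[T]_p)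
  : 'cV[T]_(\sum_u n u * p) := \mxcol_u tensglue (F u).

Lemma piece_glue (T : Type) U p (n : 'I_U -> nat) (F : forall u, 'I_(n u) -> 'cV[T]_p) u i :
  piece (glue F) u i = F u i.
Proof. by rewrite /piece mxcolK tensblock_glue. Qed.

Section GsForm.
Variables (R : realType) (p U : nat) (n : 'I_U -> nat).
Variables (GA GC : 'I_U -> 'M[R]_p) (GD : 'I_U -> 'I_U -> 'M[R]_p).
Hypothesis n_gt0 : forall u, (0 < n u)%N.

Definition GCeff u : 'M[R]_p := if n u == 1%N then 0 else GC u.

Lemma mxform_Gs_diag u (y : 'cV[R]_(n u * p)) :
  mxform (Gs_diag n GA GC u) y y =
  \sum_i mxform (GA u - GCeff u) (tensblock y i) (tensblock y i)
  + mxform (GCeff u) (\sum_i tensblock y i) (\sum_i tensblock y i).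
Proof.
rewrite /Gs_diag /GCeff; case: eqP => _.
  by rewrite mxform_tens1 mxform0 addr0; under [RHS]eq_bigr do rewrite subr0.
by rewrite mxformD /ones mxform_tens_const1 mxform_tens1 addrC.
Qed.

Lemma mxform_Gs x :
  mxform (Gs n GA GC GD) x x =
  \sum_u \sum_i mxform (GA u - GCeff u) (piece x u i - mean (piece x u))
                                        (piece x u i - mean (piece x u))
  + mxform (Hmat n GA GC GD) (\mxcol_u mean (piece x u)) (\mxcol_u mean (piece x u)).
Proof.
rewrite /Gs mxformD mxform_mxdiag mxform_mxblock /Hmat mxform_mxblock_mxcol.
rewrite [in RHS]sum_diag_offdiag addrA -[in RHS]big_split /=; congr (_ + _).
  by apply: eq_bigr => u _; rewrite mxform_Gs_diag mxform_centered // eqxx.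
apply: eq_bigr => u _; apply: eq_bigr => v _; case: eqP => _; first exact: mxform0.
by rewrite /ones mxform_tens_const1 mxformZ mxform_sum_mean.
Qed.

Lemma psd_Hmat_of_psd_Gs : psd (Gs n GA GC GD) -> psd (Hmat n GA GC GD).
Proof.
move=> psdG z; change (0 <= mxform (Hmat n GA GC GD) z z).
pose x := glue (fun u (_ : 'I_(n u)) => submxcol z u).
have mean_x u : mean (piece x u) = submxcol z u.
  by rewrite /mean; under eq_bigr do rewrite piece_glue; exact: mean_const.
have : 0 <= mxform (Gs n GA GC GD) x x := psdG x.
rewrite mxform_Gs.
under eq_bigr do under eq_bigr do rewrite mean_x piece_glue subrr mxform0l.
rewrite big1 ?add0r => [|u _]; last exact: big1.
suff -> : \mxcol_u mean (piece x u) = z by [].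
by rewrite -[RHS]submxcolK; apply/eq_mxcol => u; exact: mean_x.
Qed.

Lemma psd_GA_of_psd_Hmat u : n u = 1%N -> psd (Hmat n GA GC GD) -> psd (GA u).
Proof.
move=> nu1 psdH w; change (0 <= mxform (GA u) w w).
have : 0 <= mxform (Hmat n GA GC GD) (\mxcol_v (if v == u then w else 0))
                                    (\mxcol_v (if v == u then w else 0)) := psdH _.
by rewrite /Hmat mxform_mxblock_mxcol1 eqxx nu1 muln0 scale0r addr0 scale1r.
Qed.

Lemma psd_GA_sub_GC_of_psd_Gs u :
  (2 <= n u)%N -> psd (Gs n GA GC GD) -> psd (GA u - GC u).
Proof.
move=> nu_ge2 psdG w; change (0 <= mxform (GA u - GC u) w w).
pose g i : 'cV[R]_p := if i == 0%N then w else if i == 1%N then - w else 0.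
have g_supp i : (2 <= i)%N -> g i = 0 by case: i => [|[|i]].
pose x := glue (fun v (i : 'I_(n v)) => if v == u then g (val i) else 0).
have mean_x v : mean (piece x v) = 0.
  rewrite /mean; under eq_bigr do rewrite piece_glue.
  case: eqP => [->|_]; last by rewrite big1 ?scaler0.
  by rewrite (sum_ord_supp01 nu_ge2 g_supp) /g /= addrN scaler0.
have : 0 <= mxform (Gs n GA GC GD) x x := psdG x.
rewrite mxform_Gs.
under eq_bigr do under eq_bigr do rewrite mean_x subr0 piece_glue.
under eq_mxcol do rewrite mean_x.
rewrite mxcol0 mxform0l addr0 (bigD1 u) //= [X in _ + X]big1 ?addr0; last first.
  by move=> v /negPf ->; apply: big1 => i _; rewrite mxform0l.
rewrite eqxx (@sum_ord_supp01 _ _ (fun i => mxform (GA u - GCeff u) (g i) (g i)) nu_ge2);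
  last by move=> i /g_supp ->; rewrite mxform0l.
rewrite /g /= -[- w]scaleN1r mxformZl mxformZr !mulN1r opprK -mulr2n /GCeff.
by rewrite ifN ?pmulrn_lge0 //; apply: contraTneq nu_ge2 => ->.
Qed.

Lemma psd_Gs_of_psd_blocks :
  (forall u, psd (GA u - GCeff u)) -> psd (Hmat n GA GC GD) -> psd (Gs n GA GC GD).
Proof.
move=> psdAC psdH x; change (0 <= mxform (Gs n GA GC GD) x x).
rewrite mxform_Gs; apply: addr_ge0; last exact: psdH.
by apply: sumr_ge0 => u _; apply: sumr_ge0 => i _; apply: psdAC.
Qed.

End GsForm.

Unset Implicit Arguments.

Theorem lemma5 (R : realType) (p U : nat) (n : 'I_U -> nat)
  (GA GC : 'I_U -> 'M[R]_p) (GD : 'I_U -> 'I_U -> 'M[R]_p) :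
  (1 <= p)%N -> (1 <= U)%N ->
  (forall u, (1 <= n u)%N) ->
  (forall u, (GA u)^T = GA u) ->
  (forall u, (2 <= n u)%N -> (GC u)^T = GC u) ->
  (forall u v, u != v -> GD v u = (GD u v)^T) ->
  psd (Gs n GA GC GD) <->
  [/\ (forall u, n u = 1%N -> psd (GA u)),
      (forall u, (2 <= n u)%N -> psd (GA u - GC u)) &
      psd (Hmat n GA GC GD)].
Proof.
move=> _ _ n_gt0 _ _ _; split=> [psdG | [psdA psdAC psdH]].
  split=> [u nu1 | u nu_ge2 |]; last exact: psd_Hmat_of_psd_Gs.
    by apply: psd_GA_of_psd_Hmat nu1 _; exact: psd_Hmat_of_psd_Gs.
  exact: psd_GA_sub_GC_of_psd_Gs.
apply: psd_Gs_of_psd_blocks => // u; rewrite /GCeff.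
have [nu1 | nu_ne1] := eqVneq (n u) 1%N; first by rewrite subr0; apply: psdA.
by apply: psdAC; rewrite ltn_neqAle eq_sym nu_ne1 n_gt0.
Qed.
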